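(* Let $p$ be a prime, $\mathcal{V}=\mathbb{F}_p^n$, and let $\mathcal{V}$ act on $\mathbb{Z}^{\mathcal{V}}$ by $u\cdot e_v=e_{u+v}$ (translation of the standard basis). Let $x=\sum_{v\in\mathcal{V}}x_ve_v\in\mathbb{Z}^{\mathcal{V}}$ and assume either $p$ is odd or $\sum_{v\in\mathcal{V}}x_v$ is divisible by $4$. If the stabilizer $\operatorname{Stab}_{\mathcal{V}}(x)$ is nontrivial, then $\sum_{v\in\mathcal{V}}x_v v=0$ in $\mathcal{V}$. In particular, if $\sum_v x_v=0$ and $\sum_v x_vv\neq0$, then $\operatorname{Stab}_{\mathcal{V}}(x)=\{0\}$.
   Context: $\mathbb{Z}^{\mathcal{V}}$ is the free abelian group with standard basis $\{e_v\}_{v\in\mathcal{V}}$; in $\sum_v x_vv$ the integers $x_v$ act on $\mathcal{V}$ via reduction mod $p$. *)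

From HB Require Import structures.
From mathcomp Require Import all_boot all_order all_algebra.
Set Implicit Arguments. Unset Strict Implicit. Unset Printing Implicit Defensive.
Import Order.TTheory GRing.Theory Num.Theory.
Local Open Scope ring_scope.

(* V = F_p^n is modelled as row vectors 'rV['F_p]_n.
   An element x = sum_v x_v e_v of Z^V is modelled by its coefficient
   function x : V -> int (V is finite, so every such function is an element). *)
Notation Vsp p n := 'rV['F_p]_n.

(* Action of V on Z^V: u . e_v = e_(u+v); hence (u . x)_w = x_(w - u). *)
Definition transl (p n : nat) (u : Vsp p n) (x : Vsp p n -> int) : Vsp p n -> int :=
  fun w => x (w - u).

Definition in_stab (p n : nat) (x : Vsp p n -> int) (u : Vsp p n) : Prop :=
  transl u x = x.

Definition wsum (p n : nat) (x : Vsp p n -> int) : Vsp p n :=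
  \sum_(v : Vsp p n) v *~ x v.

Definition tsum (p n : nat) (x : Vsp p n -> int) : int :=
  \sum_(v : Vsp p n) x v.

From mathcomp Require Import all_boot all_order all_algebra.
Set Implicit Arguments. Unset Strict Implicit. Unset Printing Implicit Defensive.
Import GRing.Theory.
Local Open Scope ring_scope.

(* If u != 0 stabilizes x, then x is constant on the cosets w + F_p u of the
   line through u.  Summing coset by coset, tsum x = p A and
   wsum x = (sum_(c in F_p) c) A u, where A sums x over a transversal.  For p
   odd the elements of F_p sum to 0; for p = 2, 4 | tsum x = 2 A makes A even,
   and an even multiple of a vector of F_2^n vanishes. *)

Section LineDecomposition.

Variables (F : finFieldType) (n : nat) (u : 'rV[F]_n) (i : 'I_n).
Hypothesis ui_neq0 : u 0 i != 0.

Lemma big_rV_line (R : nmodType) (G : 'rV[F]_n -> R) :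
  \sum_v G v = \sum_(w : 'rV[F]_n | w 0 i == 0) \sum_(c : F) G (w + c *: u).
Proof.
pose coord (v : 'rV[F]_n) := v 0 i / u 0 i.
have coordDZ w c : coord (w + c *: u) = coord w + c.
  by rewrite /coord !mxE mulrDl mulfK.
rewrite (partition_big (fun v => v - coord v *: u) (fun w => w 0 i == 0)); last first.
  by move=> v _; rewrite !mxE mulfVK // subrr.
apply: eq_bigr => w /eqP wi0.
have coord_w : coord w = 0 by rewrite /coord wi0 mul0r.
rewrite (reindex_onto (fun c => w + c *: u) coord) => [|v /eqP <-]; last first.
  by rewrite subrK.
by apply: eq_bigl => c; rewrite coordDZ coord_w add0r addrK !eqxx.
Qed.

End LineDecomposition.

Lemma rV_neq0_coord (R : nzRingType) n (u : 'rV[R]_n) :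
  u != 0 -> exists i, u 0 i != 0.
Proof.
move=> u_neq0; apply/existsP; apply: contraNT u_neq0 => /existsPn u0.
by apply/eqP/rowP => j; rewrite mxE; apply/eqP/negPn/u0.
Qed.

Lemma sum_finField_eq0 (F : finFieldType) : 2%:R != 0 :> F -> \sum_(c : F) c = 0.
Proof.
move=> two_neq0; set s := \sum_(c : F) c.
have sN : s = - s by rewrite {1}/s (reindex_inj (@oppr_inj _)) sumrN.
have : 2%:R * s == 0 by rewrite mulr2n mulrDl mul1r {1}sN addNr.
by rewrite mulf_eq0 (negbTE two_neq0) => /eqP.
Qed.

Lemma Fp_two_neq0 p : prime p -> odd p -> 2%:R != 0 :> 'F_p.
Proof.
move=> p_pr p_odd; rewrite -(dvdn_pcharf (pchar_Fp p_pr)).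
by rewrite dvdn_prime2 //; apply: contraL p_odd => /eqP ->.
Qed.

Lemma rV_Fp_mulrz_dvd p n (v : 'rV['F_p]_n) (m : int) :
  prime p -> (p %| m)%Z -> v *~ m = 0.
Proof.
move=> p_pr; rewrite (dvdz_pcharf (pchar_Fp p_pr)) => /eqP m0.
by rewrite -scaler_int m0 scale0r.
Qed.

Section Stabilizer.

Variables (p n : nat) (x : 'rV['F_p]_n -> int) (u : 'rV['F_p]_n).
Hypotheses (p_pr : prime p) (x_stab : in_stab x u).

Lemma in_stab_line w (c : 'F_p) : x (w + c *: u) = x w.
Proof.
rewrite -[c](@natr_Zp (Zp_trunc (pdiv p))) scaler_nat.
elim: (nat_of_ord c) => [|m IHm]; first by rewrite mulr0n addr0.
by rewrite mulrSr addrA -{1}x_stab /transl addrK.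
Qed.

Variable i : 'I_n.
Hypothesis ui_neq0 : u 0 i != 0.

Let A := \sum_(w : 'rV['F_p]_n | w 0 i == 0) x w.

Lemma tsum_stab : tsum x = A *+ p.
Proof.
rewrite /tsum (big_rV_line ui_neq0) /A -sumrMnl; apply: eq_bigr => w _.
by under eq_bigr do rewrite in_stab_line; rewrite sumr_const card_Fp.
Qed.

Lemma wsum_stab : wsum x = ((\sum_(c : 'F_p) c) *: u) *~ A.
Proof.
rewrite /wsum (big_rV_line ui_neq0) /A raddf_sum /=; apply: eq_bigr => w _.
under eq_bigr do rewrite in_stab_line.
rewrite -mulrz_suml big_split /= sumr_const card_Fp // scaler_suml.
by rewrite -scaler_nat pchar_Fp_0 // scale0r add0r.
Qed.

Lemma wsum_stab_eq0 : odd p \/ (4 %| tsum x)%Z -> wsum x = 0.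
Proof.
rewrite wsum_stab; have [p_odd _ | p_even [//|]] := boolP (odd p).
  by rewrite sum_finField_eq0 ?Fp_two_neq0 // scale0r mul0rz.
have p2 : p = 2%N by case: (even_prime p_pr) p_even => // ->.
move=> four_dvd; apply: rV_Fp_mulrz_dvd => //; rewrite p2.
move: four_dvd; rewrite tsum_stab p2 -[A *+ 2]mulr_natr.
by rewrite -[4]/(2 * 2 : int) dvdz_mul2r.
Qed.

End Stabilizer.

Theorem lemma14p2 (p n : nat) (x : 'rV['F_p]_n -> int) :
  prime p ->
  ((odd p \/ (4 %| tsum x)%Z) ->
     (exists u : 'rV['F_p]_n, u != 0 /\ in_stab x u) -> wsum x = 0) /\
  (tsum x = 0 -> wsum x != 0 -> forall u, in_stab x u -> u = 0).
Proof.
move=> p_pr; split=> [hyp [u [u_neq0 x_stab]] | tsum0 wsum_neq0 u x_stab].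
  have [i ui_neq0] := rV_neq0_coord u_neq0.
  exact: (wsum_stab_eq0 p_pr x_stab ui_neq0 hyp).
apply/eqP; apply: contraNT wsum_neq0 => /rV_neq0_coord [i ui_neq0].
by apply/eqP/(wsum_stab_eq0 p_pr x_stab ui_neq0); right; rewrite tsum0 dvdz0.
Qed.
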